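(* Let $n\ge3$. All roots of $\Phi_n(x)=0$ are real, and they are simple except $x=2$, which is a double root. Let $\tilde\alpha_n$ be the minimal root. If $n$ is even, then \[ \tilde\alpha_n=\alpha^{(n)}_n=2\cos\frac{n\pi}{n+1}=-2\cos\frac{\pi}{n+1}. \] If $n$ is odd, then $-2<\tilde\alpha_n<\alpha^{(n)}_n$.
   Context: $U_n$ is the Chebyshev polynomial of the second kind, $U_n(\cos\theta)=\sin((n+1)\theta)/\sin\theta$, $\tilde U_n(x)=U_n(x/2)$, and $\Phi_n(x)=((n+1)x^2-6x-4n)\tilde U_n(x)+2(x+2)\tilde U_{n-1}(x)+2(x+2)$. For $1\le l\le n$, $\alpha^{(n)}_l=2\cos\frac{l\pi}{n+1}$. *)

From HB Require Import structures.
From mathcomp Require Import all_boot all_order all_algebra.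
From mathcomp Require Import all_classical all_reals all_analysis.
Set Implicit Arguments. Unset Strict Implicit. Unset Printing Implicit Defensive.
Import Order.TTheory GRing.Theory Num.Theory.
Local Open Scope ring_scope.

(* Ut n = \tilde U_n(x) = U_n(x/2), the rescaled Chebyshev polynomial of the
   second kind, given by its standard three-term recurrence:
   Ut 0 = 1, Ut 1 = X, Ut (m+2) = X * Ut (m+1) - Ut m. *)
Fixpoint Utpair (R : nzRingType) (n : nat) : {poly R} * {poly R} :=
  (* returns (Ut n, Ut (n+1)) *)
  match n with
  | 0 => (1, 'X)
  | m.+1 => let: (u0, u1) := Utpair R m in (u1, 'X * u1 - u0)
  end.
Definition Ut (R : nzRingType) (n : nat) : {poly R} := (Utpair R n).1.

Definition Phi (R : nzRingType) (n : nat) : {poly R} :=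
  ((n.+1)%:R *: 'X^2 - 6%:R *: 'X - (4 * n)%:R%:P) * Ut R n
  + 2%:R *: ('X + 2%:R%:P) * Ut R n.-1 + 2%:R *: ('X + 2%:R%:P).

Definition alpha (R : realType) (n l : nat) : R :=
  2 * cos (l%:R * pi / (n.+1)%:R).

From HB Require Import structures.
From mathcomp Require Import all_boot all_order all_algebra.
From mathcomp Require Import all_classical all_reals all_analysis.
From mathcomp Require Import ring lra zify.
Import Order.TTheory GRing.Theory Num.Theory.
Import numFieldNormedType.Exports.
Local Open Scope ring_scope.

(* Substitute x = 2 cos t.  From sin t * U_k(2 cos t) = sin ((k+1) t) one gets
   sin t * Phi_n(2 cos t) = 2 sin ((n+1) t / 2) * Psi(t) for an explicit
   trigonometric Psi.  At the nodes theta_k = k pi / (n+1) the first factor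
   vanishes for even k, giving the roots alpha_2j, while Psi alternates in sign
   on the odd nodes; so Psi has a zero between consecutive odd nodes, different
   from the even node in between because Psi does not vanish there (this uses
   that -2n/(n+2) is not a root of the monic integer polynomial U_n).  One last
   sign change, on (theta_(n-1), theta_n) for even n (using
   cos (pi/(n+1)) > n/(n+2)) and on (theta_n, pi) for odd n, gives n distinct
   roots in (-2, 2).  With the double root 2 these are all n + 2 roots of Phi_n,
   and the position of the last one identifies the minimal root. *)

Lemma nat_ind2 (P : nat -> Prop) :
  P 0%N -> P 1%N -> (forall k, P k -> P k.+1 -> P k.+2) -> forall k, P k.
Proof.
move=> P0 P1 PS k; suff: P k /\ P k.+1 by case.
by elim: k => [|k [Pk Pk1]]; split=> //; apply: PS.
Qed.

Lemma Ut_SS (R : nzRingType) k : Ut R k.+2 = 'X * Ut R k.+1 - Ut R k.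
Proof. by rewrite /Ut /=; case: (Utpair R k). Qed.

Lemma monic_size_Ut (R : nzRingType) k : Ut R k \is monic /\ size (Ut R k) = k.+1.
Proof.
elim/nat_ind2: k => [||k [_ sU0] [mU1 sU1]].
- by rewrite monic1 size_poly1.
- by rewrite monicX size_polyX.
have sXU : size ('X * Ut R k.+1) = k.+3.
  by rewrite -commr_polyX size_mulX ?monic_neq0 // sU1.
have ltU : (size (- Ut R k) < size ('X * Ut R k.+1)%R)%N by rewrite size_polyN sU0 sXU.
rewrite Ut_SS monicE lead_coefDl // size_polyDl // sXU -commr_polyX lead_coefMX.
by rewrite (monicP mU1).
Qed.

Lemma monic_Ut (R : nzRingType) k : Ut R k \is monic.
Proof. by case: (monic_size_Ut R k). Qed.

Lemma size_Ut (R : nzRingType) k : size (Ut R k) = k.+1.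
Proof. by case: (monic_size_Ut R k). Qed.

Lemma map_Ut (R S : nzRingType) (f : {rmorphism R -> S}) k :
  map_poly f (Ut R k) = Ut S k.
Proof.
elim/nat_ind2: k => [||k IH0 IH1]; first exact: rmorph1.
  exact: map_polyX.
by rewrite !Ut_SS rmorphB rmorphM /= map_polyX IH0 IH1.
Qed.

Section ChebyshevAt2.
Variable R : comNzRingType.

Lemma horner_Ut2 k : (Ut R k).[2] = k.+1%:R.
Proof.
elim/nat_ind2: k => [||k IH0 IH1]; first by rewrite hornerC.
  by rewrite hornerX.
rewrite Ut_SS hornerD hornerN hornerM hornerX IH0 IH1 -[k.+3]addn3 -[k.+2]addn2.
by rewrite -[k.+1]addn1 !natrD; ring.
Qed.

Lemma horner_deriv_Ut2 k : (Ut R k)^`().[2] * 6 = (k * k.+1 * k.+2)%:R.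
Proof.
elim/nat_ind2: k => [||k IH0 IH1]; first by rewrite derivC hornerC mul0r.
  by rewrite derivX hornerC mul1r.
rewrite Ut_SS derivB derivM derivX mul1r !(hornerD, hornerN, hornerM, hornerX).
rewrite mulrBl !mulrDl -mulrA IH0 IH1 horner_Ut2 !natrM -[k.+4]addn4 -[k.+3]addn3.
by rewrite -[k.+2]addn2 -[k.+1]addn1 !natrD; ring.
Qed.

End ChebyshevAt2.

Lemma horner_map_intr_scaled (R : numFieldType) (p : {poly int}) k (a q : int) :
  q != 0 -> (size p <= k.+1)%N ->
  q%:~R ^+ k * (map_poly intr p).[a%:~R / q%:~R]
  = (\sum_(i < k.+1) p`_i * a ^+ i * q ^+ (k - i))%:~R :> R.
Proof.
move=> q0 sp; have q0R : q%:~R != 0 :> R by rewrite intr_eq0.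
have sp' : (size (map_poly intr p : {poly R}) <= k.+1)%N.
  by rewrite size_map_inj_poly //; exact: intr_inj.
rewrite (horner_coef_wide _ sp') mulr_sumr rmorph_sum.
apply: eq_bigr => i _; rewrite coef_map /= !rmorphM !rmorphXn /=.
rewrite -{1}(subnK (ltnSE (ltn_ord i))) exprD expr_div_n; field.
by rewrite expf_neq0.
Qed.

Lemma ratr_root_monic_int (R : numFieldType) (p : {poly int}) (r : rat) :
  p \is monic -> root (map_poly intr p) (ratr r : R) -> r \is a Num.int.
Proof.
move=> mp /eqP pr; rewrite Qint_def.
have [d sp] : exists d, size p = d.+1.
  by exists (size p).-1; rewrite prednK // size_poly_gt0 monic_neq0.
have := horner_map_intr_scaled R p d (numq r) _ (denq_neq0 r) (eq_leq sp).
have lead1 : p`_d = 1 by move/monicP: mp; rewrite lead_coefE sp.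
rewrite -/(ratr r) pr mulr0 => /esym/eqP; rewrite intr_eq0 big_ord_recr /= subnn.
rewrite expr0 mulr1 lead1 mul1r addrC addr_eq0 => /eqP num_pow.
have dvd_pow : (denq r %| numq r ^+ d)%Z.
  rewrite num_pow rpredN rpred_sum // => i _.
  by rewrite dvdz_mull // dvdz_exp // subn_gt0.
have co : coprimez (denq r) (numq r ^+ d).
  by rewrite coprimezXr // coprimez_sym coprimezE coprime_num_den.
have : (denq r %| 1)%Z by rewrite -(Gauss_dvdzr 1 co) mulr1.
by rewrite dvdz1 => /eqP den1; rewrite -absz_denq den1.
Qed.

Lemma Ut_neq0_at (R : numFieldType) n : (3 <= n)%N ->
  (Ut R n).[- ((2 * n)%:R / (n + 2)%:R)] != 0.
Proof.
(* The point -2n/(n+2) lies strictly between -2 and -1, so it is not an integer,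
   whereas rational roots of the monic integer polynomial U_n are integers. *)
move=> n3; set r : rat := - ((2 * n)%:R / (n + 2)%:R).
have -> : - ((2 * n)%:R / (n + 2)%:R) = ratr r :> R.
  by rewrite /r rmorphN fmorph_div !rmorph_nat.
have r_bounds : -2 < r < -1.
  have n2 : 0 < (n + 2)%:R :> rat by rewrite ltr0n addn2.
  rewrite /r ltrNr opprK ltrNl opprK ltr_pdivrMr // ltr_pdivlMr // mul1r.
  by rewrite -!natrM !ltr_nat; apply/andP; split; lia.
rewrite -(map_Ut _ _ intr); apply/negP => /(ratr_root_monic_int _ _ _ (monic_Ut _ _)).
move=> /intrP[z rz]; move: r_bounds.
by rewrite rz -[-2 : rat]/((-2)%:~R) -[-1 : rat]/((-1)%:~R) !ltr_int; lia.
Qed.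

Definition Phi_quad {R : nzRingType} n (x : R) : R := n.+1%:R * x ^+ 2 - 6 * x - (4 * n)%:R.

Lemma horner_Phi (R : comNzRingType) n x : (Phi R n).[x] =
  Phi_quad n x * (Ut R n).[x] + 2 * (x + 2) * (Ut R n.-1).[x] + 2 * (x + 2).
Proof. by rewrite /Phi /Phi_quad !hornerE. Qed.

Lemma root_Phi2 (R : comNzRingType) n : (0 < n)%N -> root (Phi R n) 2.
Proof.
case: n => // n _; rewrite /root horner_Phi /Phi_quad /= !horner_Ut2.
by rewrite !natrM -[n.+2]addn2 -[n.+1]addn1 !natrD; apply/eqP; ring.
Qed.

Lemma root_deriv_Phi2 (R : numFieldType) n : (0 < n)%N -> root (Phi R n)^`() 2.
Proof.
case: n => // n _; have six : 6 != 0 :> R by rewrite pnatr_eq0.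
have D1 : (Ut R n.+1)^`().[2] = (n.+1 * n.+2 * n.+3)%:R / 6.
  by rewrite -horner_deriv_Ut2 mulfK.
have D0 : (Ut R n)^`().[2] = (n * n.+1 * n.+2)%:R / 6.
  by rewrite -horner_deriv_Ut2 mulfK.
rewrite /root /Phi !(derivD, derivB, derivM, derivZ, derivX, derivC, derivXn, derivN) /=.
rewrite !(hornerD, hornerN, hornerM, hornerX, hornerC, hornerZ, hornerXn) D1 D0 !horner_Ut2.
by rewrite !natrM -[n.+3]addn3 -[n.+2]addn2 -[n.+1]addn1 !natrD; apply/eqP; field.
Qed.

Lemma size_Phi (R : numDomainType) n : (0 < n)%N -> size (Phi R n) = n.+3.
Proof.
move=> n0; rewrite /Phi; set Q := (_ *: 'X^2 - _ - _).
have size_lin : size (2%:R *: ('X + 2%:R%:P) : {poly R}) = 2%N.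
  by rewrite size_scale ?pnatr_eq0 // size_XaddC.
have sQ : size Q = 3%N.
  rewrite /Q -addrA -opprD size_polyDl size_scale ?pnatr_eq0 ?size_polyXn //.
  rewrite size_polyN (leq_ltn_trans (size_polyD _ _)) // gtn_max size_polyC.
  by rewrite (leq_ltn_trans (size_scale_leq _ _)) ?size_polyX //; case: eqP.
have sQU : size (Q * Ut R n) = n.+3.
  by rewrite size_Mmonic ?monic_Ut ?sQ ?size_Ut // -size_poly_eq0 sQ.
rewrite -addrA size_polyDl sQU // (leq_ltn_trans (size_polyD _ _)) // gtn_max.
rewrite size_lin andbT (leq_ltn_trans (size_polyMleq _ _)) //.
by rewrite size_lin size_Ut; lia.
Qed.

Lemma poly_prod_XsubC_double_root (F : fieldType) (p : {poly F}) (c : F) (s : seq F) :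
  root p c -> root p^`() c -> uniq s -> c \notin s -> all (root p) s ->
  size p = (size s).+3 -> p = lead_coef p *: \prod_(r <- [:: c, c & s]) ('X - r%:P).
Proof.
move=> /factor_theorem[q ->] dpc us cs /allP sp sizep.
move: dpc; rewrite /root derivM derivXsubC mulr1 !hornerE subrr mulr0 add0r.
move=> /factor_theorem[h eq_q]; rewrite {}eq_q in sp sizep *.
have hs : all (root h) s.
  apply/allP => r rs; move: (sp r rs); rewrite /root !hornerM hornerXsubC.
  have rc : r != c by apply: contraNneq cs => <-.
  by rewrite !mulf_eq0 subr_eq0 (negbTE rc) !orbF.
have [g eq_h] : exists g : {poly F}, h = g * \prod_(r <- s) ('X - r%:P).
  by apply: uniq_roots_prod_XsubC hs _; rewrite uniq_rootsE.
set M := \prod_(r <- [:: c, c & s]) ('X - r%:P).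
have eqM : h * ('X - c%:P) * ('X - c%:P) = g * M by rewrite eq_h /M !big_cons; ring.
rewrite eqM in sizep *.
have mM : M \is monic by apply: monic_prod_XsubC.
have /size_poly1P[a _ ->] : size g == 1%N.
  have g0 : g != 0 by apply/eqP => g0; move: sizep; rewrite g0 mul0r size_poly0.
  by move: sizep; rewrite size_Mmonic // size_prod_XsubC /= => sz; apply/eqP; lia.
by rewrite mul_polyC lead_coefZ (monicP mM) mulr1.
Qed.

Section Trigonometry.
Context {R : realType}.

Lemma sin_natmulpi j : sin (j%:R * pi) = 0 :> R.
Proof. by rewrite mulr_natl -[_ *+ _]add0r (alternatingn (@sinDpi R)) sin0 mulr0. Qed.

Lemma cos_natmulpi j : cos (j%:R * pi) = (-1) ^+ j :> R.
Proof. by rewrite mulr_natl -[_ *+ _]add0r (alternatingn (@cosDpi R)) cos0 mulr1. Qed.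

Lemma ltN1_cos_lt1 (t : R) : 0 < t < pi -> -1 < cos t < 1.
Proof.
move=> /andP[t0 tpi]; have in0pi x : 0 <= x <= pi -> x \in `[0, pi] by rewrite in_itv.
have tI : t \in `[0, pi] by apply: in0pi; rewrite !ltW.
apply/andP; split; first by rewrite -cospi ltr_cos // in0pi // lexx pi_ge0.
by rewrite -cos0 ltr_cos // in0pi // lexx pi_ge0.
Qed.

Lemma sin_le_id (x : R) : 0 <= x -> sin x <= x.
Proof.
rewrite le_eqVlt => /predU1P[<-|x0]; first by rewrite sin0.
have [c _] := MVT x0 (fun y _ => is_derive_sin y)
  (continuous_subspaceT (@continuous_sin R)).
by rewrite sin0 !subr0 => ->; rewrite ler_piMl ?cos_le1 // ltW.
Qed.

Lemma cos_ge_1_sub_half_sqr (u : R) : 0 <= u <= pi -> 1 - u ^+ 2 / 2 <= cos u.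
Proof.
move=> /andP[u0 upi].
have half : cos u = 1 - 2 * sin (u / 2) ^+ 2.
  by rewrite -{1}[u](divfK (_ : 2 != 0 :> R)) // mulr_natr cos_mulr2n cos2sin2; ring.
have s0 : 0 <= sin (u / 2) by apply: sin_ge0_pi; apply/andP; split; lra.
have s1 : sin (u / 2) <= u / 2 by apply: sin_le_id; lra.
by rewrite half; nra.
Qed.

Lemma sin_Ut k t : sin t * (Ut R k).[2 * cos t] = sin (k.+1%:R * t).
Proof.
elim/nat_ind2: k => [||k IH0 IH1]; first by rewrite hornerC mulr1 mul1r.
  by rewrite hornerX [in RHS]mulr_natl sin_mulr2n -mulr_natl; ring.
rewrite Ut_SS hornerD hornerN hornerM hornerX mulrBr mulrCA IH1 IH0.
have -> : k.+3%:R * t = k.+2%:R * t + t by rewrite -[k.+3]addn1 natrD mulrDl mul1r.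
have -> : k.+1%:R * t = k.+2%:R * t - t by rewrite -[k.+2]addn1 natrD mulrDl mul1r addrK.
by rewrite sinB sinD; ring.
Qed.

End Trigonometry.

Section IntermediateValues.
Context {R : realType} {f : R -> R}.
Hypothesis f_cont : continuous f.

Lemma IVT_open [a b : R] : a < b -> f a * f b < 0 -> exists2 c, a < c < b & f c = 0.
Proof.
move=> ab fab.
have fa0 : f a != 0 by apply: contraTneq fab => ->; rewrite mul0r ltxx.
have fb0 : f b != 0 by apply: contraTneq fab => ->; rewrite mulr0 ltxx.
have [c] : exists2 c, c \in `[a, b] & f c = 0.
  apply: IVT (ltW ab) (continuous_subspaceT f_cont) _.
  rewrite ge_min le_max; apply/andP; split; apply/orP.
  - by have [fa|fa] := ltP (f a) 0; [left; rewrite ltW | right; nra].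
  - by have [fa|fa] := ltP (f a) 0; [right; nra | left].
rewrite in_itv /= => /andP[ac cb] fc0; exists c => //.
have ca : c != a by apply: contraNneq fa0 => <-; rewrite fc0.
have bc : b != c by apply: contraNneq fb0 => ->; rewrite fc0.
by rewrite !lt_def ca bc ac cb.
Qed.

Lemma IVT_open_avoid [a m b : R] : a < m < b -> f a * f b < 0 -> f m != 0 ->
  exists2 c, a < c < b & c != m /\ f c = 0.
Proof.
move=> /andP[am mb] fab fm0; have fm2 : 0 < f m ^+ 2 by rewrite exprn_even_gt0.
have [fam|fam] := ltP (f a * f m) 0.
  have [c /andP[ac cm] fc0] := IVT_open am fam.
  by exists c; [rewrite ac (lt_trans cm mb) | rewrite (lt_eqF cm)].
have fmb : f m * f b < 0 by nra.
have [c /andP[mc cb] fc0] := IVT_open mb fmb.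
by exists c; [rewrite cb (lt_trans am mc) | rewrite (gt_eqF mc)].
Qed.

End IntermediateValues.

Section ChebyshevNodes.
Variables (R : realType) (n : nat).

Definition theta k : R := k%:R * pi / n.+1%:R.

Lemma alphaE k : alpha R n k = 2 * cos (theta k).
Proof. by []. Qed.

Lemma mulr_theta k : n.+1%:R * theta k = k%:R * pi.
Proof. by rewrite mulrC divfK ?pnatr_eq0. Qed.

Lemma theta_gt0 k : (0 < k)%N -> 0 < theta k.
Proof. by move=> k0; rewrite divr_gt0 ?mulr_gt0 ?ltr0n ?pi_gt0. Qed.

Lemma ltr_theta k l : (k < l)%N -> theta k < theta l.
Proof. by move=> kl; rewrite ltr_pM2r ?invr_gt0 ?ltr0n // ltr_pM2r ?pi_gt0 // ltr_nat. Qed.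

Lemma theta_n1 : theta n.+1 = pi.
Proof. by rewrite /theta mulrAC divff ?mul1r ?pnatr_eq0. Qed.

Lemma theta_ltpi k : (k <= n)%N -> theta k < pi.
Proof. by rewrite -ltnS => /ltr_theta; rewrite theta_n1. Qed.

Lemma Ut_alpha k : (0 < k)%N -> (k <= n)%N -> (Ut R n).[alpha R n k] = 0.
Proof.
move=> k0 kn; have /gt_eqF s0 : 0 < sin (theta k).
  by apply: sin_gt0_pi; rewrite theta_gt0 ?theta_ltpi.
by have /eqP := sin_Ut n (theta k); rewrite mulr_theta sin_natmulpi mulf_eq0 s0 => /eqP.
Qed.

(* The cofactor of 2 sin ((n+1) t / 2) in sin t * Phi_n(2 cos t), see sin_Phi. *)
Definition Psi (t : R) := Phi_quad n (2 * cos t) * cos (n.+1%:R * t / 2)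
  + 2 * (2 * cos t + 2) * cos (n.+1%:R * t / 2 - t).

Hypothesis n_gt0 : (0 < n)%N.

Lemma sin_Phi t : sin t * (Phi R n).[2 * cos t] = 2 * sin (n.+1%:R * t / 2) * Psi t.
Proof.
rewrite horner_Phi /Psi; set x := 2 * cos t; set A := n.+1%:R * t / 2.
transitivity (Phi_quad n x * (sin t * (Ut R n).[x])
  + 2 * (x + 2) * (sin t * (Ut R n.-1).[x]) + 2 * (x + 2) * sin t); first by ring.
have A2 : n.+1%:R * t = A + A by rewrite /A; field.
have An : n%:R * t = A + (A - t) by rewrite addrA -A2 -[n.+1]addn1 natrD mulrDl mul1r addrK.
have At : sin t = sin (A - (A - t)) by rewrite opprB addrC subrK.
rewrite !sin_Ut prednK // A2 An At sinB !sinD; ring.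
Qed.

Lemma Psi_theta_even j : Psi (theta j.*2) =
  (-1) ^+ j * ((alpha R n j.*2 - 2) * (n.+2%:R * alpha R n j.*2 + (2 * n)%:R)).
Proof.
rewrite /Psi mulr_theta -muln2 natrM mulrAC mulfK ?pnatr_eq0 //.
rewrite cosB cos_natmulpi sin_natmulpi alphaE /Phi_quad.
by rewrite !natrM -[n.+2]addn2 -[n.+1]addn1 !natrD; ring.
Qed.

Lemma Psi_theta_odd j : Psi (theta j.*2.+1) =
  (-1) ^+ j * (2 * (alpha R n j.*2.+1 + 2) * sin (theta j.*2.+1)).
Proof.
rewrite /Psi mulr_theta.
have -> : j.*2.+1%:R * pi / 2 = j%:R * pi + pi / 2 :> R.
  by rewrite -addn1 -muln2 natrD natrM; field.
rewrite cosB cosD sinD cos_natmulpi sin_natmulpi cos_pihalf sin_pihalf alphaE; ring.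
Qed.

Lemma continuous_Psi : continuous Psi.
Proof.
have cos_lin (a : R) : continuous (fun t => cos (a * t)).
  by move=> t; apply: continuous_comp; [exact: mulrl_continuous | exact: continuous_cos].
have poly_cos (p : {poly R}) : continuous (fun t => p.[cos t]).
  by move=> t; apply: continuous_comp; [exact: continuous_cos | exact: continuous_horner].
set a := n.+1%:R / 2 : R.
set P1 : {poly R} := (n.+1%:R * 4)%:P * 'X^2 - 12%:P * 'X - (4 * n)%:R%:P.
set P2 : {poly R} := 4%:P * 'X + 4%:P.
have -> : Psi = (fun t => P1.[cos t]) \* (fun t => cos (a * t))
               \+ (fun t => P2.[cos t]) \* (fun t => cos ((a - 1) * t)).
  apply/funext => t; have e : n.+1%:R * t / 2 = a * t by rewrite mulrAC.
  rewrite /Psi /P1 /P2 /Phi_quad /= e [(a - 1) * t]mulrBl mul1r.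
  by rewrite !(hornerD, hornerN, hornerM, hornerC, hornerX, hornerXn); ring.
by move=> t; apply: continuousD; apply: continuousM; by [apply: poly_cos | apply: cos_lin].
Qed.

Lemma Psi_pi : Psi pi = 16 * cos (n.+1%:R * pi / 2).
Proof.
rewrite /Psi cospi /Phi_quad !natrM -[n.+1]addn1 natrD; ring.
Qed.

Lemma root_Phi_alpha_even j : (0 < j)%N -> (j.*2 <= n)%N -> root (Phi R n) (alpha R n j.*2).
Proof.
move=> j0 jn; have /gt_eqF s0 : 0 < sin (theta j.*2).
  by apply: sin_gt0_pi; rewrite theta_gt0 ?double_gt0 ?theta_ltpi.
have := sin_Phi (theta j.*2); rewrite mulr_theta.
have -> : j.*2%:R * pi / 2 = j%:R * pi :> R by rewrite -muln2 natrM; field.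
by rewrite sin_natmulpi mulr0 mul0r => /eqP; rewrite mulf_eq0 s0.
Qed.

Lemma root_Phi_Psi t : 0 < t < pi -> Psi t = 0 -> root (Phi R n) (2 * cos t).
Proof.
move=> /sin_gt0_pi/gt_eqF s0 Psi0; have /eqP := sin_Phi t.
by rewrite Psi0 mulr0 mulf_eq0 s0.
Qed.

Lemma Psi_theta_even_neq0 j : (3 <= n)%N -> (0 < j)%N -> (j.*2 <= n)%N ->
  Psi (theta j.*2) != 0.
Proof.
move=> n3 j0 jn; rewrite Psi_theta_even !mulf_eq0 signr_eq0 !negb_or /=.
have /andP[_ c1] : -1 < cos (theta j.*2) < 1.
  by apply: ltN1_cos_lt1; rewrite theta_gt0 ?double_gt0 ?theta_ltpi.
apply/andP; split; first by rewrite alphaE subr_eq0 lt_eqF //; lra.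
apply/eqP => lin0; have /eqP := Ut_neq0_at R n n3; apply.
have -> : - ((2 * n)%:R / (n + 2)%:R) = alpha R n j.*2.
  have nz : n.+2%:R != 0 :> R by rewrite pnatr_eq0.
  apply: (mulfI nz); rewrite addn2 mulrN mulrCA divff // mulr1.
  by apply/eqP; rewrite eq_sym -subr_eq0 opprK lin0.
by rewrite Ut_alpha ?double_gt0.
Qed.

Lemma Psi_theta_odd_sign j : (j.*2 < n)%N -> 0 < (-1) ^+ j * Psi (theta j.*2.+1).
Proof.
move=> jn; have t_in : 0 < theta j.*2.+1 < pi by rewrite theta_gt0 ?theta_ltpi.
have /ltN1_cos_lt1/andP[c1 _] := t_in; have s0 := sin_gt0_pi t_in.
rewrite Psi_theta_odd mulrA -exprMn mulrNN mulr1 expr1n mul1r alphaE.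
by rewrite !mulr_gt0 //; lra.
Qed.

Lemma alpha_nn : alpha R n n = - 2 * cos (pi / n.+1%:R).
Proof.
rewrite alphaE; have -> : theta n = pi - pi / n.+1%:R.
  by rewrite /theta -natr1; field; rewrite natr1 pnatr_eq0.
by rewrite cosB cospi sinpi mul0r addr0; ring.
Qed.

Lemma alpha_nn_lin_lt0 : (4 <= n)%N -> n.+2%:R * alpha R n n + (2 * n)%:R < 0.
Proof.
move=> n4; rewrite alpha_nn -[n.+2]addn2 -[n.+1%:R]natr1 natrD natrM.
set N : R := n%:R; have N4 : 4 <= N by rewrite (ler_nat R 4).
set u := pi / (N + 1); have pi0 := @pi_gt0 R.
have pi4 : pi < 4 :> R by have := @pihalf_lt2 R; lra.
have u_in : 0 <= u <= pi.
  by rewrite divr_ge0 ?ler_pdivrMr /=; nra.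
have cu := cos_ge_1_sub_half_sqr _ u_in.
have u2 : (N + 2) * u ^+ 2 < 4.
  have p16 : (N + 2) * pi ^+ 2 < (N + 2) * 16 by rewrite ltr_pM2l; nra.
  rewrite /u expr_div_n mulrA ltr_pdivrMr; nra.
have : (N + 2) * (1 - u ^+ 2 / 2) <= (N + 2) * cos u by rewrite ler_pM2l //; lra.
nra.
Qed.

Lemma Psi_theta_odd_alternate j : (j.*2.+3 <= n)%N ->
  Psi (theta j.*2.+1) * Psi (theta j.+1.*2.+1) < 0.
Proof.
move=> jn; have s0 : 0 < (-1) ^+ j * Psi (theta j.*2.+1).
  by apply: Psi_theta_odd_sign; lia.
have : 0 < (-1) ^+ j.+1 * Psi (theta j.+1.*2.+1) by apply: Psi_theta_odd_sign; lia.
have e2 : (-1) ^+ j * (-1) ^+ j = 1 :> R by rewrite -exprMn mulrNN mulr1 expr1n.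
rewrite exprS; nra.
Qed.

Lemma Phi_roots_below m : (3 <= n)%N -> (m.*2.+1 <= n)%N -> exists L : seq R,
  [/\ size L = m.*2, uniq L &
      {in L, forall t, 0 < t < theta m.*2.+1 /\ root (Phi R n) (2 * cos t)}].
Proof.
move=> n3; elim: m => [_|m IH mn]; first by exists [::].
have [|L [sizeL uniqL L_roots]] := IH; first lia.
set t1 := theta m.*2.+1; set t2 := theta m.+1.*2; set t3 := theta m.+1.*2.+1.
have L_lt t : t \in L -> t < t1 by case/L_roots => /andP[].
have t12 : t1 < t2 by apply: ltr_theta; lia.
have t23 : t2 < t3 by apply: ltr_theta.
have t1_gt0 : 0 < t1 by apply: theta_gt0.
have t3_ltpi : t3 < pi by apply: theta_ltpi.
have [c /andP[t1c ct3] [ct2 Psi_c]] : exists2 c, t1 < c < t3 & c != t2 /\ Psi c = 0.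
  apply: (IVT_open_avoid continuous_Psi); first by rewrite t12 t23.
    by apply: Psi_theta_odd_alternate; lia.
  by apply: Psi_theta_even_neq0 => //; lia.
exists [:: t2, c & L]; split.
- by rewrite /= sizeL doubleS.
- rewrite /= uniqL andbT inE negb_or eq_sym ct2 /=.
  by apply/andP; split; apply/negP => /L_lt; lra.
move=> t; rewrite !inE => /orP[/eqP->|/orP[/eqP->|tL]].
- split; first by apply/andP; split; lra.
  by apply: root_Phi_alpha_even => //; lia.
- split; first by apply/andP; split; lra.
  by apply: root_Phi_Psi => //; apply/andP; split; lra.
- have [/andP[t0 _] rt] := L_roots t tL; have := L_lt t tL.
  by split => //; apply/andP; split; lra.
Qed.

Lemma Phi_roots_odd : (3 <= n)%N -> odd n -> exists L : seq R,
  [/\ size L = n, uniq L,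
       {in L, forall t, 0 < t < pi /\ root (Phi R n) (2 * cos t)}
     & exists2 t, t \in L & theta n < t].
Proof.
move=> n3 n_odd; have [m n_eq] : exists m, n = m.*2.+1.
  by exists n./2; move: (odd_double_half n); rewrite n_odd; lia.
have [|L [sizeL uniqL L_roots]] := Phi_roots_below m n3; first by rewrite n_eq.
have L_lt t : t \in L -> t < theta n by rewrite n_eq; case/L_roots => /andP[].
have tn_gt0 : 0 < theta n by apply: theta_gt0.
have [c /andP[tn_c c_pi] Psi_c] : exists2 c, theta n < c < pi & Psi c = 0.
  rewrite -theta_n1; apply: (IVT_open continuous_Psi); first exact: ltr_theta.
  have : 0 < (-1) ^+ m * Psi (theta n).
    by rewrite {1}n_eq; apply: Psi_theta_odd_sign; rewrite n_eq.
  have e2 : (-1) ^+ m * (-1) ^+ m = 1 :> R by rewrite -exprMn mulrNN mulr1 expr1n.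
  rewrite theta_n1 Psi_pi; have -> : n.+1%:R * pi / 2 = m.+1%:R * pi :> R.
    by rewrite n_eq -doubleS -muln2 natrM; field.
  by rewrite cos_natmulpi exprS; nra.
exists (c :: L); split.
- by rewrite /= sizeL n_eq.
- by rewrite /= uniqL andbT; apply/negP => /L_lt; lra.
- move=> t; rewrite inE => /predU1P[->|tL].
    split; first by apply/andP; split; lra.
    by apply: root_Phi_Psi => //; apply/andP; split; lra.
  have [/andP[t0 _] rt] := L_roots t tL; have := L_lt t tL.
  by have := theta_ltpi n (leqnn n); split => //; apply/andP; split; lra.
- by exists c; rewrite ?inE ?eqxx.
Qed.

Lemma Phi_roots_even : (3 <= n)%N -> ~~ odd n -> exists L : seq R,
  [/\ size L = n, uniq L,
       {in L, forall t, 0 < t < pi /\ root (Phi R n) (2 * cos t)},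
       theta n \in L & {in L, forall t, t <= theta n}].
Proof.
move=> n3 n_even; have [m n_eq] : exists m, n = m.+2.*2.
  exists (n./2 - 2)%N; move: (odd_double_half n) n3.
  by rewrite (negbTE n_even) add0n; lia.
have [|L [sizeL uniqL L_roots]] := Phi_roots_below m.+1 n3; first by rewrite n_eq.
set t1 := theta m.+1.*2.+1.
have L_lt t : t \in L -> t < t1 by case/L_roots => /andP[].
have t1_gt0 : 0 < t1 by apply: theta_gt0.
have t1n : t1 < theta n by apply: ltr_theta; rewrite n_eq.
have tn_pi : theta n < pi := theta_ltpi n (leqnn n).
have [c /andP[t1c c_tn] Psi_c] : exists2 c, t1 < c < theta n & Psi c = 0.
  apply: (IVT_open continuous_Psi t1n).
  have : 0 < (-1) ^+ m.+1 * Psi t1 by apply: Psi_theta_odd_sign; rewrite n_eq.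
  have alpha_lt2 : alpha R n n < 2.
    have /ltN1_cos_lt1/andP[_ c1] : 0 < theta n < pi by rewrite tn_pi (lt_trans t1_gt0).
    by rewrite alphaE; lra.
  have lin_lt0 : n.+2%:R * alpha R n n + (2 * n)%:R < 0.
    by apply: alpha_nn_lin_lt0; rewrite n_eq.
  have Q : 0 < (alpha R n n - 2) * (n.+2%:R * alpha R n n + (2 * n)%:R).
    by rewrite nmulr_rgt0 // subr_lt0.
  have := Psi_theta_even m.+2; rewrite -n_eq => -> /=.
  rewrite !exprS !mulN1r opprK mulNr oppr_gt0 mulrA [Psi t1 * _]mulrC => sgn_t1.
  by rewrite pmulr_llt0.
exists [:: theta n, c & L]; split.
- by rewrite /= sizeL n_eq.
- rewrite /= uniqL andbT inE negb_or eq_sym (lt_eqF c_tn) /=.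
  by apply/andP; split; apply/negP => /L_lt; lra.
- move=> t; rewrite !inE => /orP[/eqP->|/orP[/eqP->|tL]].
  + split; first by rewrite tn_pi (lt_trans t1_gt0).
    by have := root_Phi_alpha_even m.+2; rewrite -n_eq; apply.
  + split; first by apply/andP; split; lra.
    by apply: root_Phi_Psi => //; apply/andP; split; lra.
  + have [/andP[t0 _] rt] := L_roots t tL; have := L_lt t tL.
    by split => //; apply/andP; split; lra.
- by rewrite inE eqxx.
- move=> t; rewrite !inE => /orP[/eqP->|/orP[/eqP->|/L_lt]]; lra.
Qed.

Lemma map_2cos_roots [L : seq R] : uniq L ->
    {in L, forall t, 0 < t < pi /\ root (Phi R n) (2 * cos t)} ->
  uniq [seq 2 * cos t | t <- L]
  /\ {in [seq 2 * cos t | t <- L], forall x, -2 < x < 2 /\ root (Phi R n) x}.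
Proof.
move=> uniqL L_roots; have in0pi t : t \in L -> t \in `[0, pi].
  by case/L_roots => /andP[t0 tpi] _; rewrite in_itv /= !ltW.
split.
  rewrite map_inj_in_uniq // => t u tL uL e.
  by apply: (cos_inj (in0pi t tL) (in0pi u uL)); apply: (@mulfI _ 2).
move=> _ /mapP[t tL ->]; have [t_in rt] := L_roots t tL.
by have /ltN1_cos_lt1/andP[? ?] := t_in; split=> //; apply/andP; split; lra.
Qed.

Lemma Phi_real_roots : (3 <= n)%N -> exists s : seq R,
  [/\ size s = n, uniq s, {in s, forall x, -2 < x < 2 /\ root (Phi R n) x},
       ~~ odd n -> alpha R n n \in s /\ {in s, forall x, alpha R n n <= x}
     & odd n -> exists2 x, x \in s & x < alpha R n n].
Proof.
move=> n3; have in0pi (t : R) : 0 < t < pi -> t \in `[0, pi].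
  by move=> /andP[t0 tpi]; rewrite in_itv /= !ltW.
have tn_in : theta n \in `[0, pi] by rewrite in0pi // theta_ltpi // theta_gt0.
have [n_odd|n_even] := boolP (odd n).
  have [L [sizeL uniqL L_roots [t tL tn_t]]] := Phi_roots_odd n3 n_odd.
  have [uniq_s s_roots] := map_2cos_roots uniqL L_roots.
  exists [seq 2 * cos t | t <- L]; split; rewrite ?size_map ?n_odd //.
  exists (2 * cos t); first exact: map_f.
  have [t_in _] := L_roots t tL.
  by rewrite alphaE ltr_pM2l // ltr_cos // in0pi.
have [L [sizeL uniqL L_roots tnL L_le]] := Phi_roots_even n3 n_even.
have [uniq_s s_roots] := map_2cos_roots uniqL L_roots.
exists [seq 2 * cos t | t <- L]; split; rewrite ?size_map ?(negbTE n_even) //.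
split; first exact: (map_f _ tnL).
move=> _ /mapP[t tL ->]; have [t_in _] := L_roots t tL.
by rewrite alphaE ler_pM2l // leNgt ltr_cos // ?in0pi // -leNgt L_le.
Qed.

End ChebyshevNodes.

Theorem proposition4p12 (R : realType) (n : nat) (hn : (3 <= n)%N) :
  [/\ Phi R n != 0,
      (* all roots are real: Phi n splits into linear factors over R,
         with x = 2 a double root and every other root simple *)
      exists2 s : seq R,
        Phi R n = lead_coef (Phi R n) *: \prod_(r <- s) ('X - r%:P)
        & count_mem 2 s = 2%N /\ (forall r, r \in s -> r != 2 -> count_mem r s = 1%N)
    & forall a : R, root (Phi R n) a -> (forall b, root (Phi R n) b -> a <= b) ->
        (~~ odd n -> a = alpha R n n /\ alpha R n n = - 2 * cos (pi / (n.+1)%:R))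
        /\ (odd n -> -2 < a < alpha R n n)].
Proof.
have n_gt0 : (0 < n)%N by apply: ltn_trans hn.
have [s [size_s uniq_s s_roots min_even min_odd]] := Phi_real_roots R n n_gt0 hn.
have two_s : 2 \notin s by apply/negP => /s_roots[/andP[_]]; rewrite ltxx.
have Phi_eq : Phi R n = lead_coef (Phi R n) *: \prod_(r <- [:: 2, 2 & s]) ('X - r%:P).
  apply: poly_prod_XsubC_double_root; rewrite ?root_Phi2 ?root_deriv_Phi2 ?size_Phi ?size_s //.
  by apply/allP => x /s_roots[].
have Phi_neq0 : Phi R n != 0 by rewrite -size_poly_eq0 size_Phi.
have roots_Phi b : root (Phi R n) b -> b = 2 \/ b \in s.
  rewrite Phi_eq rootZ ?lead_coef_eq0 // root_prod_XsubC !inE orbA orbb.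
  by case/predU1P; [left | right].
split => //.
  exists [:: 2, 2 & s] => //; split; first by rewrite /= eqxx (count_memPn two_s).
  move=> r; rewrite !inE orbA orbb => /predU1P[-> /eqP //|rs r2].
  by rewrite /= eq_sym (negbTE r2) count_uniq_mem ?rs.
move=> a a_root a_min; split => [n_even|n_odd].
  have [alpha_s alpha_min] := min_even n_even; split; last exact: alpha_nn.
  apply/eqP; rewrite eq_le a_min ?(s_roots _ alpha_s).2 //=.
  case: (roots_Phi a a_root) => [->|/alpha_min //].
  by rewrite alphaE; have := cos_le1 (theta R n n); lra.
have [x xs x_lt] := min_odd n_odd.
rewrite (le_lt_trans (a_min x (s_roots x xs).2) x_lt) andbT.
by case: (roots_Phi a a_root) => [->|/s_roots[/andP[]]] //; lra.
Qed.
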